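(* For a Cartesian left additive category $\mathbb{X}$, the category $\mathcal{D}[\mathbb{X}]$ of $\mathsf{D}$-sequences is a Cartesian differential category whose differential combinator is $\mathsf{D}[f_\bullet]_n=f_{n+1}$ (equivalently, the combinator $\mathsf{D}^\delta[f_\bullet]=\delta(f_\bullet)_1$ induced by the comultiplication $\delta$ equals $\mathsf{D}[f_\bullet]$). Furthermore, the induced tangent functor of $\mathcal{D}[\mathbb{X}]$, given on objects by $A\mapsto A\times A$ and on maps by $f_\bullet\mapsto\langle (i_\bullet\cdot\pi_0)\ast f_\bullet,\mathsf{D}[f_\bullet]\rangle$, coincides with $f_\bullet\mapsto\mathsf{T}(f_\bullet)$, where $\mathsf{T}(f_\bullet)_n=\langle\mathsf{P}^n(\pi_0)f_n,f_{n+1}\rangle$.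
   Context: Composition is in diagrammatic order. A left additive category: hom-sets commutative monoids with $f(g+h)=fg+fh$, $f0=0$; $h$ additive if $(f+g)h=fh+gh$, $0h=0$. A Cartesian left additive category: left additive with finite products and additive projections. A Cartesian differential category is a Cartesian left additive category with a combinator $\mathsf{D}$, $f:A\to B\mapsto\mathsf{D}[f]:A\times A\to B$, satisfying: [CD.1] $\mathsf{D}[f+g]=\mathsf{D}[f]+\mathsf{D}[g]$, $\mathsf{D}[0]=0$; [CD.2] $(1\times(\pi_0+\pi_1))\mathsf{D}[f]=(1\times\pi_0)\mathsf{D}[f]+(1\times\pi_1)\mathsf{D}[f]$, $\langle1,0\rangle\mathsf{D}[f]=0$; [CD.3] $\mathsf{D}[1]=\pi_1$, $\mathsf{D}[\pi_j]=\pi_1\pi_j$; [CD.4] $\mathsf{D}[\langle f,g\rangle]=\langle\mathsf{D}[f],\mathsf{D}[g]\rangle$; [CD.5] $\mathsf{D}[fg]=\langle\pi_0f,\mathsf{D}[f]\rangle\mathsf{D}[g]$; [CD.6] $\ell\mathsf{D}[\mathsf{D}[f]]=\mathsf{D}[f]$, $\ell=\langle1,0\rangle\times\langle0,1\rangle:A\times A\to(A\times A)\times(A\times A)$; [CD.7] $c\mathsf{D}[\mathsf{D}[f]]=\mathsf{D}[\mathsf{D}[f]]$, $c=\langle\langle\pi_0\pi_0,\pi_1\pi_0\rangle,\langle\pi_0\pi_1,\pi_1\pi_1\rangle\rangle$ (swap of the middle components of $(A\times A)\times(A\times A)$). Let $\mathsf{P}(A)=A\times A$, $\mathsf{P}(f)=f\times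 f$. A pre-$\mathsf{D}$-sequence $f_\bullet:A\to B$ is $(f_0,f_1,\dots)$ with $f_n:\mathsf{P}^n(A)\to B$. $(h\cdot f_\bullet)_n=\mathsf{P}^n(h)f_n$, $(f_\bullet\cdot k)_n=f_nk$. $\mathsf{T}(f_\bullet):\mathsf{P}(A)\to\mathsf{P}(B)$ with $\mathsf{T}(f_\bullet)_n=\langle\mathsf{P}^n(\pi_0)f_n,f_{n+1}\rangle$; $\mathsf{D}[f_\bullet]:\mathsf{P}(A)\to B$ with $\mathsf{D}[f_\bullet]_n=f_{n+1}$. Identity: $i_0=1$, $i_n=\pi_1\cdots\pi_1$ ($n$ times). Composition: $(f_\bullet\ast g_\bullet)_n=\mathsf{T}^n(f_\bullet)_0g_n$. Products in sequences: projections $i_\bullet\cdot\pi_j$, pairing $\langle f_\bullet,g_\bullet\rangle_n=\langle f_n,g_n\rangle$, terminal object of $\mathbb{X}$; sums and zero pointwise. A $\mathsf{D}$-sequence is a pre-$\mathsf{D}$-sequence with, for all $n$: $\langle1,0\rangle\cdot\mathsf{D}^{n+1}[f_\bullet]=0_\bullet$; $(1\times(\pi_0+\pi_1))\cdot\mathsf{D}^{n+1}[f_\bullet]=(1\times\pi_0)\cdot\mathsf{D}^{n+1}[f_\bullet]+(1\times\pi_1)\cdot\mathsf{D}^{n+1}[f_\bullet]$; $\ell\cdot\mathsf{D}^{n+2}[f_\bullet]=\mathsf{D}^{n+1}[f_\bullet]$; $c\cdot\mathsf{D}^{n+2}[f_\bullet]=\mathsf{D}^{n+2}[f_\bullet]$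 (maps $\langle1,0\rangle,1\times\pi_j,\ell,c$ taken for the object $\mathsf{P}^n(A)$). $\mathcal{D}[\mathbb{X}]$ is the category of $\mathsf{D}$-sequences with this structure. The comultiplication $\delta:\mathcal{D}[\mathbb{X}]\to\mathcal{D}[\mathcal{D}[\mathbb{X}]]$ sends $f_\bullet$ to the sequence with $0$-th term $f_\bullet$ and $n$-th term $\mathsf{D}^n[f_\bullet]$. *)

(* Composition is written in DIAGRAMMATIC order:
   [comp f g] means "first f, then g" (the paper's  f g ). *)

Record CLAC_data : Type := {
  Ob : Type;
  Hom : Ob -> Ob -> Type;
  idm : forall A, Hom A A;
  comp : forall A B C, Hom A B -> Hom B C -> Hom A C;
  add : forall A B, Hom A B -> Hom A B -> Hom A B;
  zero : forall A B, Hom A B;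
  prd : Ob -> Ob -> Ob;
  p0 : forall A B, Hom (prd A B) A;
  p1 : forall A B, Hom (prd A B) B;
  pair : forall A B C, Hom A B -> Hom A C -> Hom A (prd B C);
  term : Ob;
  bang : forall A, Hom A term
}.

Arguments Hom {c} _ _.
Arguments idm {c} _.
Arguments comp {c A B C} _ _.
Arguments add {c A B} _ _.
Arguments zero {c} _ _.
Arguments prd {c} _ _.
Arguments p0 {c} _ _.
Arguments p1 {c} _ _.
Arguments pair {c A B C} _ _.
Arguments term {c}.
Arguments bang {c} _.

Section Derived.
Variable C : CLAC_data.

Definition prodmap {A A' B B' : Ob C} (f : Hom A B) (g : Hom A' B')
  : Hom (prd A A') (prd B B') :=
  pair (comp (p0 A A') f) (comp (p1 A A') g).

Definition P (A : Ob C) : Ob C := prd A A.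

Definition pair10 (A : Ob C) : Hom A (P A) := pair (idm A) (zero A A).

Definition one_x_sum (A : Ob C) : Hom (prd A (P A)) (P A) :=
  prodmap (idm A) (add (p0 A A) (p1 A A)).
Definition one_x_p0 (A : Ob C) : Hom (prd A (P A)) (P A) :=
  prodmap (idm A) (p0 A A).
Definition one_x_p1 (A : Ob C) : Hom (prd A (P A)) (P A) :=
  prodmap (idm A) (p1 A A).

Definition ell (A : Ob C) : Hom (P A) (P (P A)) :=
  prodmap (pair (idm A) (zero A A)) (pair (zero A A) (idm A)).

Definition cswap (A : Ob C) : Hom (P (P A)) (P (P A)) :=
  pair (pair (comp (p0 (P A) (P A)) (p0 A A)) (comp (p1 (P A) (P A)) (p0 A A)))
       (pair (comp (p0 (P A) (P A)) (p1 A A)) (comp (p1 (P A) (P A)) (p1 A A))).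

End Derived.

Arguments prodmap {C A A' B B'} _ _.
Arguments P {C} _.
Arguments pair10 {C} _.
Arguments one_x_sum {C} _.
Arguments one_x_p0 {C} _.
Arguments one_x_p1 {C} _.
Arguments ell {C} _.
Arguments cswap {C} _.

(* Cartesian left additive category axioms, relative to a class [good] *)
(* of maps (for the base category, all maps; for D[X], the D-sequences *)
(* among all pre-D-sequences).  The clauses "closed_*" say that [good]  *)
(* maps form a subcategory containing the structure maps; all axioms   *)
(* are required for good maps.                                         *)
Record is_CLAC (C : CLAC_data) (good : forall A B : Ob C, Hom A B -> Prop)
  : Prop := {
  closed_id : forall A, good A A (idm A);
  closed_comp : forall A B D (f : Hom A B) (g : Hom B D),
      good _ _ f -> good _ _ g -> good _ _ (comp f g);
  closed_add : forall A B (f g : Hom A B),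
      good _ _ f -> good _ _ g -> good _ _ (add f g);
  closed_zero : forall A B, good A B (zero A B);
  closed_p0 : forall A B, good _ _ (p0 A B);
  closed_p1 : forall A B, good _ _ (p1 A B);
  closed_pair : forall A B D (f : Hom A B) (g : Hom A D),
      good _ _ f -> good _ _ g -> good _ _ (pair f g);
  closed_bang : forall A, good _ _ (bang A);
  comp_id_l : forall A B (f : Hom A B), good _ _ f -> comp (idm A) f = f;
  comp_id_r : forall A B (f : Hom A B), good _ _ f -> comp f (idm B) = f;
  comp_assoc : forall A B D E (f : Hom A B) (g : Hom B D) (h : Hom D E),
      good _ _ f -> good _ _ g -> good _ _ h ->
      comp (comp f g) h = comp f (comp g h);
  add_assoc : forall A B (f g h : Hom A B),
      good _ _ f -> good _ _ g -> good _ _ h ->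
      add (add f g) h = add f (add g h);
  add_comm : forall A B (f g : Hom A B),
      good _ _ f -> good _ _ g -> add f g = add g f;
  add_zero : forall A B (f : Hom A B), good _ _ f -> add f (zero A B) = f;
  comp_add_r : forall A B D (f : Hom A B) (g h : Hom B D),
      good _ _ f -> good _ _ g -> good _ _ h ->
      comp f (add g h) = add (comp f g) (comp f h);
  comp_zero_r : forall A B D (f : Hom A B),
      good _ _ f -> comp f (zero B D) = zero A D;
  pair_p0 : forall A B D (f : Hom A B) (g : Hom A D),
      good _ _ f -> good _ _ g -> comp (pair f g) (p0 B D) = f;
  pair_p1 : forall A B D (f : Hom A B) (g : Hom A D),
      good _ _ f -> good _ _ g -> comp (pair f g) (p1 B D) = g;
  pair_eta : forall A B D (h : Hom A (prd B D)),
      good _ _ h -> pair (comp h (p0 B D)) (comp h (p1 B D)) = h;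
  term_unique : forall A (f : Hom A term), good _ _ f -> f = bang A;
  p0_additive : forall A B D (f g : Hom A (prd B D)),
      good _ _ f -> good _ _ g ->
      comp (add f g) (p0 B D) = add (comp f (p0 B D)) (comp g (p0 B D));
  p0_zero : forall A B D, comp (@zero C A (prd B D)) (p0 B D) = @zero C A B;
  p1_additive : forall A B D (f g : Hom A (prd B D)),
      good _ _ f -> good _ _ g ->
      comp (add f g) (p1 B D) = add (comp f (p1 B D)) (comp g (p1 B D));
  p1_zero : forall A B D, comp (@zero C A (prd B D)) (p1 B D) = @zero C A D
}.

Record is_CDC (C : CLAC_data) (good : forall A B : Ob C, Hom A B -> Prop)
  (Dc : forall A B : Ob C, Hom A B -> Hom (P A) B) : Prop := {
  cdc_clac : is_CLAC C good;
  closed_D : forall A B (f : Hom A B), good _ _ f -> good _ _ (Dc A B f);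
  CD1_add : forall A B (f g : Hom A B), good _ _ f -> good _ _ g ->
      Dc A B (add f g) = add (Dc A B f) (Dc A B g);
  CD1_zero : forall A B, Dc A B (@zero C A B) = @zero C (P A) B;
  CD2_add : forall A B (f : Hom A B), good _ _ f ->
      comp (one_x_sum A) (Dc A B f)
      = add (comp (one_x_p0 A) (Dc A B f)) (comp (one_x_p1 A) (Dc A B f));
  CD2_zero : forall A B (f : Hom A B), good _ _ f ->
      comp (pair10 A) (Dc A B f) = zero A B;
  CD3_id : forall A, Dc A A (idm A) = p1 A A;
  CD3_p0 : forall A B, Dc _ _ (p0 A B) = comp (p1 (prd A B) (prd A B)) (p0 A B);
  CD3_p1 : forall A B, Dc _ _ (p1 A B) = comp (p1 (prd A B) (prd A B)) (p1 A B);
  CD4 : forall A B D (f : Hom A B) (g : Hom A D), good _ _ f -> good _ _ g ->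
      Dc _ _ (pair f g) = pair (Dc _ _ f) (Dc _ _ g);
  CD5 : forall A B D (f : Hom A B) (g : Hom B D), good _ _ f -> good _ _ g ->
      Dc _ _ (comp f g) = comp (pair (comp (p0 A A) f) (Dc _ _ f)) (Dc _ _ g);
  CD6 : forall A B (f : Hom A B), good _ _ f ->
      comp (ell A) (Dc _ _ (Dc _ _ f)) = Dc _ _ f;
  CD7 : forall A B (f : Hom A B), good _ _ f ->
      comp (cswap A) (Dc _ _ (Dc _ _ f)) = Dc _ _ (Dc _ _ f)
}.

Definition tangent_of (C : CLAC_data) (Dc : forall A B : Ob C, Hom A B -> Hom (P A) B)
  {A B : Ob C} (f : Hom A B) : Hom (P A) (P B) :=
  pair (comp (p0 A A) f) (Dc A B f).

Record CLAC : Type := {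
  clac_data :> CLAC_data;
  clac_axioms : is_CLAC clac_data (fun _ _ _ => True)
}.

Section Seqs.
Variable X : CLAC_data.

(* P^n(A), iterated "inside":  P^{n+1}(A) = P^n(P(A))  (= P(P^n(A))). *)
Fixpoint Pn (n : nat) (A : Ob X) : Ob X :=
  match n with 0 => A | S m => Pn m (P A) end.

Fixpoint Pout (n : nat) (A : Ob X) : Ob X :=
  match n with 0 => A | S m => P (Pout m A) end.

Fixpoint Pmap (n : nat) {A B : Ob X} (h : Hom A B) : Hom (Pn n A) (Pn n B) :=
  match n with 0 => h | S m => Pmap m (prodmap h h) end.

Definition dseq (A B : Ob X) : Type := forall n : nat, Hom (Pn n A) B.

Definition lact {A A' B : Ob X} (h : Hom A' A) (f : dseq A B) : dseq A' B :=
  fun n => comp (Pmap n h) (f n).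

Definition ract {A B B' : Ob X} (f : dseq A B) (k : Hom B B') : dseq A B' :=
  fun n => comp (f n) k.

Definition Dseq (A B : Ob X) (f : dseq A B) : dseq (P A) B :=
  fun n => f (S n).

Definition Tseq {A B : Ob X} (f : dseq A B) : dseq (P A) (P B) :=
  fun n => pair (comp (Pmap n (p0 A A)) (f n)) (f (S n)).

Fixpoint Tn (n : nat) {A B : Ob X} (f : dseq A B) : dseq (Pn n A) (Pn n B) :=
  match n with 0 => f | S m => Tn m (Tseq f) end.

Fixpoint iden_n (n : nat) (A : Ob X) : Hom (Pn n A) A :=
  match n with 0 => idm A | S m => comp (iden_n m (P A)) (p1 A A) end.
Definition iden (A : Ob X) : dseq A A := fun n => iden_n n A.

Definition dcomp {A B D : Ob X} (f : dseq A B) (g : dseq B D) : dseq A D :=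
  fun n => comp (Tn n f 0) (g n).

Fixpoint Dout (n : nat) {A B : Ob X} (f : dseq A B) : dseq (Pout n A) B :=
  match n with 0 => f | S m => Dseq _ _ (Dout m f) end.

Fixpoint Din (n : nat) {A B : Ob X} (f : dseq A B) : dseq (Pn n A) B :=
  match n with 0 => f | S m => Din m (Dseq _ _ f) end.

(* D-sequences (maps with the objects P^n(A) as in the paper) *)
Definition isDseq (A B : Ob X) (f : dseq A B) : Prop :=
  forall n : nat,
    lact (pair10 (Pout n A)) (Dout (S n) f) = (fun k => zero _ B)
 /\ lact (one_x_sum (Pout n A)) (Dout (S n) f)
    = (fun k => add (lact (one_x_p0 (Pout n A)) (Dout (S n) f) k)
                    (lact (one_x_p1 (Pout n A)) (Dout (S n) f) k))
 /\ lact (ell (Pout n A)) (Dout (S (S n)) f) = Dout (S n) f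
 /\ lact (cswap (Pout n A)) (Dout (S (S n)) f) = Dout (S (S n)) f.

Definition DX : CLAC_data := {|
  Ob := Ob X;
  Hom := dseq;
  idm := iden;
  comp := fun A B D f g => dcomp f g;
  add := fun A B f g => fun n => add (f n) (g n);
  zero := fun A B => fun n => zero _ B;
  prd := @prd X;
  p0 := fun A B => ract (iden (prd A B)) (p0 A B);
  p1 := fun A B => ract (iden (prd A B)) (p1 A B);
  pair := fun A B D f g => fun n => pair (f n) (g n);
  term := term;
  bang := fun A => fun n => bang (Pn n A)
|}.

Definition delta {A B : Ob X} (f : dseq A B) : forall n : nat, dseq (Pn n A) B :=
  fun n => Din n f.

End Seqs.

Arguments Dseq {X A B} _ _.
Arguments isDseq {X A B} _.

(* D[X] inherits its Cartesian left additive structure pointwise, except for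
   the composition (f * g)_n = T^n(f)_0 g_n, whose unit and associativity laws
   follow from T being a functor on pre-D-sequences.  Once each structure map
   h of D[X] is identified with the sequence i.h ([lin h]), and since
   D[f * g] = T(f) * D[g] holds by definition, the axioms [CD.1]-[CD.7] for
   D[f]_n = f_{n+1} are literally the level-0 conditions defining
   D-sequences.  The real work is closure of D-sequences under composition:
   the level-0 conditions on f make T(f) intertwine <1,0>, 1 x (pi0 + pi1),
   l and c on its source with the same maps on its target, which reduces the
   conditions on f * g to those on g; higher levels follow from
   D^n[f * g] = T^n(f) * D^n[g]. *)

From Pilot Require Import Defs.
From Stdlib Require Import ssreflect FunctionalExtensionality.

Section DSequences.
Variable X : CLAC.
Let ax := clac_axioms X.

Lemma id_comp {A B : Ob X} (f : Hom A B) : comp (idm A) f = f.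
Proof. exact: comp_id_l _ _ ax A B f I. Qed.
Lemma comp_id {A B : Ob X} (f : Hom A B) : comp f (idm B) = f.
Proof. exact: comp_id_r _ _ ax A B f I. Qed.
Lemma compA {A B D E : Ob X} (f : Hom A B) (g : Hom B D) (h : Hom D E) :
  comp (comp f g) h = comp f (comp g h).
Proof. exact: comp_assoc _ _ ax _ _ _ _ f g h I I I. Qed.
Lemma addA {A B : Ob X} (f g h : Hom A B) : add (add f g) h = add f (add g h).
Proof. exact: add_assoc _ _ ax _ _ f g h I I I. Qed.
Lemma addC {A B : Ob X} (f g : Hom A B) : add f g = add g f.
Proof. exact: add_comm _ _ ax _ _ f g I I. Qed.
Lemma addm0 {A B : Ob X} (f : Hom A B) : add f (zero A B) = f.
Proof. exact: add_zero _ _ ax _ _ f I. Qed.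
Lemma comp_addr {A B D : Ob X} (f : Hom A B) (g h : Hom B D) :
  comp f (add g h) = add (comp f g) (comp f h).
Proof. exact: comp_add_r _ _ ax _ _ _ f g h I I I. Qed.
Lemma comp_0r {A B D : Ob X} (f : Hom A B) : comp f (zero B D) = zero A D.
Proof. exact: comp_zero_r _ _ ax _ _ _ f I. Qed.
Lemma pair_comp_p0 {A B D : Ob X} (f : Hom A B) (g : Hom A D) :
  comp (pair f g) (p0 B D) = f.
Proof. exact: pair_p0 _ _ ax _ _ _ f g I I. Qed.
Lemma pair_comp_p1 {A B D : Ob X} (f : Hom A B) (g : Hom A D) :
  comp (pair f g) (p1 B D) = g.
Proof. exact: pair_p1 _ _ ax _ _ _ f g I I. Qed.
Lemma term_eq {A : Ob X} (f g : Hom A term) : f = g.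
Proof. by rewrite (term_unique _ _ ax _ f I) (term_unique _ _ ax _ g I). Qed.

Lemma addACA {A B : Ob X} (a b c d : Hom A B) :
  add (add a b) (add c d) = add (add a c) (add b d).
Proof. by rewrite !addA -(addA b) (addC b) !addA. Qed.

Lemma prod_ext {A B D : Ob X} (f g : Hom A (prd B D)) :
  comp f (p0 B D) = comp g (p0 B D) -> comp f (p1 B D) = comp g (p1 B D) -> f = g.
Proof.
  move=> E0 E1.
  by rewrite -(pair_eta _ _ ax _ _ _ f I) -(pair_eta _ _ ax _ _ _ g I) E0 E1.
Qed.

Lemma comp_pair {A' A B D : Ob X} (h : Hom A' A) (a : Hom A B) (b : Hom A D) :
  comp h (pair a b) = pair (comp h a) (comp h b).
Proof. by apply: prod_ext; rewrite compA ?pair_comp_p0 ?pair_comp_p1. Qed.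

Lemma add_pair {A B D : Ob X} (a c : Hom A B) (b d : Hom A D) :
  add (pair a b) (pair c d) = pair (add a c) (add b d).
Proof.
  apply: prod_ext.
  - by rewrite (p0_additive _ _ ax _ _ _ _ _ I I) !pair_comp_p0.
  - by rewrite (p1_additive _ _ ax _ _ _ _ _ I I) !pair_comp_p1.
Qed.

Lemma pair_zero {A B D : Ob X} : pair (zero A B) (zero A D) = zero A (prd B D).
Proof.
  apply: prod_ext; rewrite ?pair_comp_p0 ?pair_comp_p1.
  - by rewrite (p0_zero _ _ ax A B D).
  - by rewrite (p1_zero _ _ ax A B D).
Qed.

Lemma prodmap_p0 {A A' B B' : Ob X} (a : Hom A B) (b : Hom A' B') :
  comp (prodmap a b) (p0 B B') = comp (p0 A A') a.
Proof. exact: pair_comp_p0. Qed.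
Lemma prodmap_p1 {A A' B B' : Ob X} (a : Hom A B) (b : Hom A' B') :
  comp (prodmap a b) (p1 B B') = comp (p1 A A') b.
Proof. exact: pair_comp_p1. Qed.

Lemma pair_prodmap {A B B' D D' : Ob X} (a : Hom A B) (b : Hom A B')
  (c : Hom B D) (d : Hom B' D') :
  comp (pair a b) (prodmap c d) = pair (comp a c) (comp b d).
Proof.
  apply: prod_ext; rewrite compA.
  - by rewrite prodmap_p0 -compA !pair_comp_p0.
  - by rewrite prodmap_p1 -compA !pair_comp_p1.
Qed.

Lemma prodmap_comp {A A' B B' D D' : Ob X} (a : Hom A B) (b : Hom A' B')
  (c : Hom B D) (d : Hom B' D') :
  comp (prodmap a b) (prodmap c d) = prodmap (comp a c) (comp b d).
Proof. by rewrite {1}/prodmap pair_prodmap !compA. Qed.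

Lemma prodmap_id {A B : Ob X} : prodmap (idm A) (idm B) = idm (prd A B).
Proof. by apply: prod_ext; rewrite ?prodmap_p0 ?prodmap_p1 id_comp comp_id. Qed.

Lemma pair_comp_p0r {A B D E : Ob X} (f : Hom A B) (g : Hom A D) (h : Hom B E) :
  comp (pair f g) (comp (p0 B D) h) = comp f h.
Proof. by rewrite -compA pair_comp_p0. Qed.
Lemma pair_comp_p1r {A B D E : Ob X} (f : Hom A B) (g : Hom A D) (h : Hom D E) :
  comp (pair f g) (comp (p1 B D) h) = comp g h.
Proof. by rewrite -compA pair_comp_p1. Qed.

Ltac prod_simpl :=
  repeat progress rewrite ?compA ?pair_comp_p0 ?pair_comp_p1 ?pair_comp_p0r
    ?pair_comp_p1r ?comp_pair ?id_comp ?comp_id ?comp_0r.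

Definition additive {B D : Ob X} (h : Hom B D) : Prop :=
  (forall A, comp (zero A B) h = zero A D) /\
  (forall A (x y : Hom A B), comp (add x y) h = add (comp x h) (comp y h)).

Lemma additive_id {B : Ob X} : additive (idm B).
Proof. by split=> *; rewrite !comp_id. Qed.
Lemma additive_p0 {B D : Ob X} : additive (p0 B D).
Proof. split=> *; [exact: (p0_zero _ _ ax) | exact: (p0_additive _ _ ax _ _ _ _ _ I I)]. Qed.
Lemma additive_p1 {B D : Ob X} : additive (p1 B D).
Proof. split=> *; [exact: (p1_zero _ _ ax) | exact: (p1_additive _ _ ax _ _ _ _ _ I I)]. Qed.
Lemma additive_comp {B D E : Ob X} (h : Hom B D) (k : Hom D E) :
  additive h -> additive k -> additive (comp h k).
Proof. by move=> [h0 hD] [k0 kD]; split=> *; rewrite -!compA ?h0 ?k0 ?hD ?kD. Qed.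
Lemma additive_prodmap {A A' B B' : Ob X} (a : Hom A B) (b : Hom A' B') :
  additive a -> additive b -> additive (prodmap a b).
Proof.
  move=> [a0 aD] [b0 bD]; split=> *; rewrite /prodmap !comp_pair -!compA.
  - by rewrite (proj1 additive_p0) (proj1 additive_p1) a0 b0 pair_zero.
  - by rewrite (proj2 additive_p0) (proj2 additive_p1) aD bD add_pair.
Qed.

Local Notation dseq := (dseq X).
Local Notation Pn := (Pn X).
Local Notation Pout := (Pout X).
Local Notation Pmap := (Pmap X).
Local Notation lact := (lact X).
Local Notation ract := (ract X).
Local Notation Tseq := (Tseq X).
Local Notation Tn := (Tn X).
Local Notation iden := (iden X).
Local Notation iden_n := (iden_n X).
Local Notation dcomp := (dcomp X).
Local Notation Dout := (Dout X).

Definition sadd {A B : Ob X} (F G : dseq A B) : dseq A B := fun n => add (F n) (G n).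
Definition szero (A B : Ob X) : dseq A B := fun n => zero _ B.
Definition spair {A B D : Ob X} (F : dseq A B) (G : dseq A D) : dseq A (prd B D) :=
  fun n => pair (F n) (G n).
Definition lin {A B : Ob X} (h : Hom A B) : dseq A B := ract (iden A) h.

Lemma dseq_ext {A B : Ob X} (F G : dseq A B) : (forall n, F n = G n) -> F = G.
Proof. exact: functional_extensionality_dep. Qed.

Lemma Pmap_comp k : forall {A B D : Ob X} (a : Hom A B) (b : Hom B D),
  Pmap k (comp a b) = comp (Pmap k a) (Pmap k b).
Proof. by elim: k => [|k IHk] A B D a b //=; rewrite -prodmap_comp IHk. Qed.

Lemma Pmap_id k : forall (A : Ob X), Pmap k (idm A) = idm (Pn k A).
Proof. by elim: k => [|k IHk] A //=; rewrite prodmap_id IHk. Qed.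

Lemma iden_n_nat k : forall {A A' : Ob X} (h : Hom A A'),
  comp (Pmap k h) (iden_n k A') = comp (iden_n k A) h.
Proof.
  elim: k => [|k IHk] A A' h /=; first by rewrite id_comp comp_id.
  by rewrite -compA IHk !compA prodmap_p1.
Qed.

Lemma lact_id {A B : Ob X} (F : dseq A B) : lact (idm A) F = F.
Proof. by apply: dseq_ext => n; rewrite /Defs.lact Pmap_id id_comp. Qed.
Lemma lact_lact {A A' A'' B : Ob X} (a : Hom A'' A') (b : Hom A' A) (F : dseq A B) :
  lact a (lact b F) = lact (comp a b) F.
Proof. by apply: dseq_ext => n; rewrite /Defs.lact Pmap_comp compA. Qed.
Lemma lact_sadd {A A' B : Ob X} (h : Hom A' A) (F G : dseq A B) :
  lact h (sadd F G) = sadd (lact h F) (lact h G).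
Proof. apply: dseq_ext => n; exact: comp_addr. Qed.
Lemma lact_szero {A A' B : Ob X} (h : Hom A' A) : lact h (szero A B) = szero A' B.
Proof. apply: dseq_ext => n; exact: comp_0r. Qed.
Lemma lact_spair {A A' B D : Ob X} (h : Hom A' A) (F : dseq A B) (G : dseq A D) :
  lact h (spair F G) = spair (lact h F) (lact h G).
Proof. apply: dseq_ext => n; exact: comp_pair. Qed.
Lemma lact_ract {A A' B B' : Ob X} (h : Hom A' A) (F : dseq A B) (k : Hom B B') :
  lact h (ract F k) = ract (lact h F) k.
Proof. apply: dseq_ext => n; symmetry; exact: compA. Qed.

Lemma ract_id {A B : Ob X} (F : dseq A B) : ract F (idm B) = F.
Proof. apply: dseq_ext => n; exact: comp_id. Qed.
Lemma ract_ract {A B B' B'' : Ob X} (F : dseq A B) (a : Hom B B') (b : Hom B' B'') :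
  ract (ract F a) b = ract F (comp a b).
Proof. apply: dseq_ext => n; exact: compA. Qed.
Lemma ract_zero {A B B' : Ob X} (F : dseq A B) : ract F (zero B B') = szero A B'.
Proof. apply: dseq_ext => n; exact: comp_0r. Qed.
Lemma ract_add {A B B' : Ob X} (F : dseq A B) (a b : Hom B B') :
  ract F (add a b) = sadd (ract F a) (ract F b).
Proof. apply: dseq_ext => n; exact: comp_addr. Qed.
Lemma ract_pair {A B D E : Ob X} (F : dseq A B) (a : Hom B D) (b : Hom B E) :
  ract F (pair a b) = spair (ract F a) (ract F b).
Proof. apply: dseq_ext => n; exact: comp_pair. Qed.
Lemma ract_sadd {A B B' : Ob X} (F G : dseq A B) (r : Hom B B') : additive r ->
  ract (sadd F G) r = sadd (ract F r) (ract G r).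
Proof. move=> [_ rD]; apply: dseq_ext => n; exact: rD. Qed.
Lemma ract_szero {A B B' : Ob X} (r : Hom B B') : additive r ->
  ract (szero A B) r = szero A B'.
Proof. move=> [r0 _]; apply: dseq_ext => n; exact: r0. Qed.
Lemma spair_p0 {A B D : Ob X} (F : dseq A B) (G : dseq A D) : ract (spair F G) (p0 B D) = F.
Proof. apply: dseq_ext => n; exact: pair_comp_p0. Qed.
Lemma spair_p1 {A B D : Ob X} (F : dseq A B) (G : dseq A D) : ract (spair F G) (p1 B D) = G.
Proof. apply: dseq_ext => n; exact: pair_comp_p1. Qed.
Lemma spair_prodmap {A B B' D D' : Ob X} (F : dseq A B) (G : dseq A B')
  (a : Hom B D) (b : Hom B' D') :
  ract (spair F G) (prodmap a b) = spair (ract F a) (ract G b).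
Proof. apply: dseq_ext => n; exact: pair_prodmap. Qed.

Lemma lact_iden {A A' : Ob X} (h : Hom A' A) : lact h (iden A) = lin h.
Proof. apply: dseq_ext => n; exact: iden_n_nat. Qed.
Lemma lact_lin {A A' B : Ob X} (h : Hom A' A) (k : Hom A B) : lact h (lin k) = lin (comp h k).
Proof. by rewrite {1}/lin lact_ract lact_iden /lin ract_ract. Qed.
Lemma lin_id {A : Ob X} : lin (idm A) = iden A.
Proof. exact: ract_id. Qed.
Lemma lin_add {A B : Ob X} (a b : Hom A B) : sadd (lin a) (lin b) = lin (add a b).
Proof. by rewrite /lin ract_add. Qed.
Lemma lin_pair {A B D : Ob X} (a : Hom A B) (b : Hom A D) :
  spair (lin a) (lin b) = lin (pair a b).
Proof. by rewrite /lin ract_pair. Qed.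
Lemma lin_zero {A B : Ob X} : lin (zero A B) = szero A B.
Proof. exact: ract_zero. Qed.

Lemma Tseq_spair {A B : Ob X} (F : dseq A B) :
  Tseq F = spair (lact (p0 A A) F) (Dseq F).
Proof. by []. Qed.
Lemma Dseq_Tseq {A B : Ob X} (F : dseq A B) :
  Dseq (Tseq F) = spair (lact (prodmap (p0 A A) (p0 A A)) (Dseq F)) (Dseq (Dseq F)).
Proof. by []. Qed.
Lemma lact_Tseq {A A' B : Ob X} (h : Hom A' (P A)) (F : dseq A B) :
  lact h (Tseq F) = spair (lact (comp h (p0 A A)) F) (lact h (Dseq F)).
Proof. by rewrite Tseq_spair lact_spair lact_lact. Qed.

Lemma Tseq_ract {A B B' : Ob X} (F : dseq A B) (k : Hom B B') :
  Tseq (ract F k) = ract (Tseq F) (prodmap k k).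
Proof. by rewrite !Tseq_spair spair_prodmap lact_ract. Qed.
Lemma Tseq_lact {A A' B : Ob X} (h : Hom A' A) (F : dseq A B) :
  Tseq (lact h F) = lact (prodmap h h) (Tseq F).
Proof. by rewrite lact_Tseq !Tseq_spair prodmap_p0 !lact_lact. Qed.
Lemma Tseq_iden (A : Ob X) : Tseq (iden A) = iden (P A).
Proof.
  apply: dseq_ext => n; rewrite /Defs.Tseq /Defs.iden /= iden_n_nat.
  exact: pair_eta _ _ ax _ _ _ _ I.
Qed.

Lemma Tn_ract m : forall {A B B' : Ob X} (F : dseq A B) (k : Hom B B'),
  Tn m (ract F k) = ract (Tn m F) (Pmap m k).
Proof. by elim: m => [|m IHm] A B B' F k //=; rewrite Tseq_ract IHm. Qed.
Lemma Tn_lact m : forall {A A' B : Ob X} (h : Hom A' A) (F : dseq A B),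
  Tn m (lact h F) = lact (Pmap m h) (Tn m F).
Proof. by elim: m => [|m IHm] A A' B h F //=; rewrite Tseq_lact IHm. Qed.
Lemma Tn_iden m : forall (A : Ob X), Tn m (iden A) = iden (Pn m A).
Proof. by elim: m => [|m IHm] A //=; rewrite Tseq_iden IHm. Qed.

Lemma Tn_comp_iden_n m : forall {A B : Ob X} (F : dseq A B),
  comp (Tn m F 0) (iden_n m B) = F m.
Proof.
  elim: m => [|m IHm] A B F /=; first exact: comp_id.
  by rewrite -compA IHm pair_comp_p1.
Qed.

Lemma Tseq_dcomp {A B D : Ob X} (F : dseq A B) (G : dseq B D) :
  Tseq (dcomp F G) = dcomp (Tseq F) (Tseq G).
Proof.
  have Tn_p0 n : comp (Pmap n (p0 A A)) (Tn n F 0)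
                 = comp (Tn n (Tseq F) 0) (Pmap n (p0 B B)).
  { transitivity (Tn n (lact (p0 A A) F) 0); first by rewrite Tn_lact.
    by rewrite -(spair_p0 (lact (p0 A A) F) (Dseq F)) Tn_ract. }
  by apply: dseq_ext => n; rewrite /Defs.Tseq /Defs.dcomp comp_pair -!compA Tn_p0.
Qed.
Lemma Tn_dcomp m : forall {A B D : Ob X} (F : dseq A B) (G : dseq B D),
  Tn m (dcomp F G) = dcomp (Tn m F) (Tn m G).
Proof. by elim: m => [|m IHm] A B D F G //=; rewrite Tseq_dcomp IHm. Qed.

Lemma dcomp_assoc {A B D E : Ob X} (F : dseq A B) (G : dseq B D) (H : dseq D E) :
  dcomp (dcomp F G) H = dcomp F (dcomp G H).
Proof. apply: dseq_ext => n; rewrite {1 3}/Defs.dcomp Tn_dcomp; exact: compA. Qed.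
Lemma dcomp_idl {A B : Ob X} (F : dseq A B) : dcomp (iden A) F = F.
Proof. apply: dseq_ext => n; rewrite /Defs.dcomp Tn_iden; exact: id_comp. Qed.
Lemma dcomp_idr {A B : Ob X} (F : dseq A B) : dcomp F (iden B) = F.
Proof. apply: dseq_ext => n; exact: Tn_comp_iden_n. Qed.
Lemma dcomp_sadd {A B D : Ob X} (F : dseq A B) (G H : dseq B D) :
  dcomp F (sadd G H) = sadd (dcomp F G) (dcomp F H).
Proof. apply: dseq_ext => n; exact: comp_addr. Qed.
Lemma dcomp_szero {A B D : Ob X} (F : dseq A B) : dcomp F (szero B D) = szero A D.
Proof. apply: dseq_ext => n; exact: comp_0r. Qed.

Lemma lact_dcomp {A A' B D : Ob X} (h : Hom A' A) (F : dseq A B) (G : dseq B D) :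
  lact h (dcomp F G) = dcomp (lact h F) G.
Proof. apply: dseq_ext => n; rewrite /Defs.dcomp Tn_lact; symmetry; exact: compA. Qed.
Lemma ract_dcomp {A B B' D : Ob X} (F : dseq A B) (k : Hom B B') (G : dseq B' D) :
  dcomp (ract F k) G = dcomp F (lact k G).
Proof. apply: dseq_ext => n; rewrite /Defs.dcomp Tn_ract; exact: compA. Qed.
Lemma lin_dcomp {A B D : Ob X} (h : Hom A B) (G : dseq B D) : dcomp (lin h) G = lact h G.
Proof. by rewrite /lin ract_dcomp dcomp_idl. Qed.
Lemma dcomp_lin {A B D : Ob X} (F : dseq A B) (k : Hom B D) : dcomp F (lin k) = ract F k.
Proof. apply: dseq_ext => n; rewrite /Defs.dcomp /= -compA; congr comp; exact: Tn_comp_iden_n. Qed.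

Lemma Dseq_sadd {A B : Ob X} (F G : dseq A B) : Dseq (sadd F G) = sadd (Dseq F) (Dseq G).
Proof. by []. Qed.
Lemma Dseq_szero (A B : Ob X) : Dseq (szero A B) = szero (P A) B.
Proof. by []. Qed.
Lemma Dseq_spair {A B D : Ob X} (F : dseq A B) (G : dseq A D) :
  Dseq (spair F G) = spair (Dseq F) (Dseq G).
Proof. by []. Qed.
Lemma Dseq_lact {A A' B : Ob X} (h : Hom A' A) (F : dseq A B) :
  Dseq (lact h F) = lact (prodmap h h) (Dseq F).
Proof. by []. Qed.
Lemma Dseq_ract {A B B' : Ob X} (F : dseq A B) (k : Hom B B') :
  Dseq (ract F k) = ract (Dseq F) k.
Proof. by []. Qed.
Lemma Dseq_dcomp {A B D : Ob X} (F : dseq A B) (G : dseq B D) :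
  Dseq (dcomp F G) = dcomp (Tseq F) (Dseq G).
Proof. by []. Qed.
Lemma Dseq_lin {A B : Ob X} (h : Hom A B) : Dseq (lin h) = lin (comp (p1 A A) h).
Proof. exact: ract_ract. Qed.

Record Dcond {A B : Ob X} (F : dseq A B) : Prop := {
  Dcond_pair10 : lact (pair10 A) (Dseq F) = szero A B;
  Dcond_sum : lact (one_x_sum A) (Dseq F)
              = sadd (lact (one_x_p0 A) (Dseq F)) (lact (one_x_p1 A) (Dseq F));
  Dcond_ell : lact (ell A) (Dseq (Dseq F)) = Dseq F;
  Dcond_cswap : lact (cswap A) (Dseq (Dseq F)) = Dseq (Dseq F)
}.

Lemma Dcond_sadd {A B : Ob X} (F G : dseq A B) : Dcond F -> Dcond G -> Dcond (sadd F G).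
Proof.
  move=> [Fa Fb Fc Fd] [Ga Gb Gc Gd]; split; rewrite !Dseq_sadd !lact_sadd.
  - by rewrite Fa Ga; apply: dseq_ext => n; rewrite /sadd addm0.
  - by rewrite Fb Gb; apply: dseq_ext => n; rewrite /sadd addACA.
  - by rewrite Fc Gc.
  - by rewrite Fd Gd.
Qed.

Lemma Dcond_szero (A B : Ob X) : Dcond (szero A B).
Proof.
  split; rewrite ?Dseq_szero ?lact_szero //.
  by apply: dseq_ext => n; rewrite /sadd addm0.
Qed.

Lemma Dcond_spair {A B D : Ob X} (F : dseq A B) (G : dseq A D) :
  Dcond F -> Dcond G -> Dcond (spair F G).
Proof.
  move=> [Fa Fb Fc Fd] [Ga Gb Gc Gd]; split; rewrite !Dseq_spair !lact_spair.
  - by rewrite Fa Ga; apply: dseq_ext => n; rewrite /spair pair_zero.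
  - by rewrite Fb Gb; apply: dseq_ext => n; rewrite /spair /sadd add_pair.
  - by rewrite Fc Gc.
  - by rewrite Fd Gd.
Qed.

Lemma Dcond_ract {A B B' : Ob X} (F : dseq A B) (r : Hom B B') :
  additive r -> Dcond F -> Dcond (ract F r).
Proof.
  move=> Hr [Fa Fb Fc Fd]; split; rewrite !Dseq_ract !lact_ract.
  - by rewrite Fa ract_szero.
  - by rewrite Fb ract_sadd.
  - by rewrite Fc.
  - by rewrite Fd.
Qed.

Lemma Dcond_term {A : Ob X} (F : dseq A term) : Dcond F.
Proof. by split; apply: dseq_ext => n; apply: term_eq. Qed.

Lemma Dcond_iden (A : Ob X) : Dcond (iden A).
Proof.
  rewrite -lin_id; split; rewrite !Dseq_lin !lact_lin !comp_id.
  - by rewrite -lin_zero /pair10 pair_comp_p1.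
  - by rewrite lin_add /one_x_sum /one_x_p0 /one_x_p1 !prodmap_p1 comp_addr.
  - by rewrite /ell -compA prodmap_p1 compA pair_comp_p1 comp_id.
  - by rewrite /cswap -!compA !pair_comp_p1.
Qed.

Section Naturality.
Variables (A' A : Ob X) (H : Hom A' A).
Hypothesis additive_H : additive H.

Lemma pair10_nat : comp (pair10 A') (prodmap H H) = comp H (pair10 A).
Proof.
  by rewrite /pair10 pair_prodmap comp_pair id_comp comp_id comp_0r (proj1 additive_H).
Qed.
Lemma pair01_nat :
  comp (pair (zero A' A') (idm A')) (prodmap H H) = comp H (pair (zero A A) (idm A)).
Proof. by rewrite pair_prodmap comp_pair id_comp comp_id comp_0r (proj1 additive_H). Qed.
Lemma one_x_sum_nat :
  comp (one_x_sum A') (prodmap H H) = comp (prodmap H (prodmap H H)) (one_x_sum A).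
Proof.
  rewrite /one_x_sum !prodmap_comp id_comp comp_id (proj2 additive_H) comp_addr.
  by rewrite prodmap_p0 prodmap_p1.
Qed.
Lemma one_x_p0_nat :
  comp (one_x_p0 A') (prodmap H H) = comp (prodmap H (prodmap H H)) (one_x_p0 A).
Proof. by rewrite /one_x_p0 !prodmap_comp id_comp comp_id prodmap_p0. Qed.
Lemma one_x_p1_nat :
  comp (one_x_p1 A') (prodmap H H) = comp (prodmap H (prodmap H H)) (one_x_p1 A).
Proof. by rewrite /one_x_p1 !prodmap_comp id_comp comp_id prodmap_p1. Qed.
Lemma ell_nat :
  comp (ell A') (prodmap (prodmap H H) (prodmap H H)) = comp (prodmap H H) (ell A).
Proof. by rewrite /ell !prodmap_comp pair10_nat pair01_nat. Qed.

End Naturality.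

Lemma cswap_nat {A' A : Ob X} (H : Hom A' A) :
  comp (cswap A') (prodmap (prodmap H H) (prodmap H H))
  = comp (prodmap (prodmap H H) (prodmap H H)) (cswap A).
Proof. rewrite /cswap /prodmap; by prod_simpl. Qed.

Lemma Dcond_lact {A A' B : Ob X} (H : Hom A' A) (F : dseq A B) :
  additive H -> Dcond F -> Dcond (lact H F).
Proof.
  move=> HH [Fa Fb Fc Fd]; split; rewrite !Dseq_lact !lact_lact.
  - by rewrite pair10_nat // -lact_lact Fa lact_szero.
  - by rewrite one_x_sum_nat // one_x_p0_nat one_x_p1_nat -!lact_lact Fb lact_sadd.
  - by rewrite ell_nat // -lact_lact Fc.
  - by rewrite cswap_nat -lact_lact Fd.
Qed.

Lemma ell_p0 (A : Ob X) : comp (ell A) (p0 (P A) (P A)) = comp (p0 A A) (pair10 A).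
Proof. exact: prodmap_p0. Qed.
Lemma ell_prodmap_p0 (A : Ob X) :
  comp (ell A) (prodmap (p0 A A) (p0 A A)) = comp (p0 A A) (pair10 A).
Proof.
  rewrite /ell prodmap_comp !pair_comp_p0 /prodmap /pair10.
  by rewrite comp_pair !comp_id !comp_0r.
Qed.
Lemma cswap_p0 (A : Ob X) : comp (cswap A) (p0 (P A) (P A)) = prodmap (p0 A A) (p0 A A).
Proof. exact: pair_comp_p0. Qed.
Lemma cswap_prodmap_p0 (A : Ob X) :
  comp (cswap A) (prodmap (p0 A A) (p0 A A)) = p0 (P A) (P A).
Proof. by apply: prod_ext; rewrite /cswap /prodmap; prod_simpl. Qed.

Lemma spair_cswap {A B : Ob X} (F G H K : dseq A B) :
  ract (spair (spair F G) (spair H K)) (cswap B) = spair (spair F H) (spair G K).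
Proof. by apply: dseq_ext => n; rewrite /spair /Defs.ract /cswap; prod_simpl. Qed.

Lemma Tseq_pair10 {A B : Ob X} (F : dseq A B) : Dcond F ->
  lact (pair10 A) (Tseq F) = ract F (pair10 B).
Proof.
  move=> [Fa _ _ _].
  by rewrite lact_Tseq pair_comp_p0 lact_id Fa /pair10 ract_pair ract_id ract_zero.
Qed.

Lemma Tseq_ell {A B : Ob X} (F : dseq A B) : Dcond F ->
  lact (ell A) (Tseq (Tseq F)) = ract (Tseq F) (ell B).
Proof.
  move=> HF; case: (HF) => Fa _ Fc _.
  rewrite lact_Tseq ell_p0 -lact_lact Tseq_pair10 // Dseq_Tseq lact_spair lact_lact.
  rewrite ell_prodmap_p0 -lact_lact Fa lact_szero Fc lact_ract.
  by rewrite Tseq_spair /ell spair_prodmap !ract_pair !ract_zero !ract_id.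
Qed.

Lemma Tseq_cswap {A B : Ob X} (F : dseq A B) : Dcond F ->
  lact (cswap A) (Tseq (Tseq F)) = ract (Tseq (Tseq F)) (cswap B).
Proof.
  move=> [_ _ _ Fd].
  rewrite lact_Tseq cswap_p0 lact_Tseq prodmap_p0 Dseq_Tseq lact_spair lact_lact.
  rewrite cswap_prodmap_p0 Fd (Tseq_spair (Tseq F)) Dseq_Tseq Tseq_spair lact_spair.
  by rewrite lact_lact spair_cswap.
Qed.

(* ((a, b), (c, d)) |-> (a, (b, d)) *)
Definition regroup (B : Ob X) : Hom (P (P B)) (prd B (P B)) :=
  pair (comp (p0 (P B) (P B)) (p0 B B))
       (pair (comp (p0 (P B) (P B)) (p1 B B)) (comp (p1 (P B) (P B)) (p1 B B))).

Lemma regroup_one_x_p0 (B : Ob X) : comp (regroup B) (one_x_p0 B) = p0 (P B) (P B).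
Proof. by apply: prod_ext; rewrite /regroup /one_x_p0 /prodmap; prod_simpl. Qed.
Lemma regroup_one_x_p1 (B : Ob X) :
  comp (regroup B) (one_x_p1 B) = prodmap (p0 B B) (p1 B B).
Proof. by rewrite /regroup /one_x_p1 /prodmap; prod_simpl. Qed.

Lemma spair_regroup {A B : Ob X} (F G0 G1 : dseq A B) :
  ract (spair (spair F G0) (spair F G1)) (regroup B) = spair F (spair G0 G1).
Proof. by apply: dseq_ext => n; rewrite /spair /Defs.ract /regroup; prod_simpl. Qed.
Lemma spair_one_x_sum {A B : Ob X} (F G0 G1 : dseq A B) :
  ract (spair F (spair G0 G1)) (one_x_sum B) = spair F (sadd G0 G1).
Proof. by rewrite /one_x_sum spair_prodmap ract_id ract_add spair_p0 spair_p1. Qed.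

Lemma prodmap_id_p0 {A A' A'' : Ob X} (g : Hom A' A'') :
  comp (prodmap (idm A) g) (p0 A A'') = p0 A A'.
Proof. by rewrite prodmap_p0 comp_id. Qed.

(* By [CD.2] for F, the tangent of F at (x, u + v) is recovered from its
   tangents at (x, u) and (x, v). *)
Lemma Tseq_one_x_sum {A B : Ob X} (F : dseq A B) : Dcond F ->
  lact (one_x_sum A) (Tseq F)
  = ract (spair (lact (one_x_p0 A) (Tseq F)) (lact (one_x_p1 A) (Tseq F)))
         (comp (regroup B) (one_x_sum B)).
Proof.
  move=> [_ Fb _ _].
  by rewrite !lact_Tseq !prodmap_id_p0 Fb -ract_ract spair_regroup spair_one_x_sum.
Qed.

Lemma Dcond_dcomp {A B D : Ob X} (F : dseq A B) (G : dseq B D) :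
  Dcond F -> Dcond G -> Dcond (dcomp F G).
Proof.
  move=> HF [Ga Gb Gc Gd]; split; rewrite !Dseq_dcomp !lact_dcomp.
  - by rewrite Tseq_pair10 // ract_dcomp Ga dcomp_szero.
  - rewrite Tseq_one_x_sum // ract_dcomp -lact_lact Gb lact_sadd !lact_lact.
    rewrite regroup_one_x_p0 regroup_one_x_p1 dcomp_sadd -!ract_dcomp.
    by rewrite spair_p0 spair_prodmap !lact_Tseq spair_p0 spair_p1 !prodmap_id_p0.
  - by rewrite Tseq_ell // ract_dcomp Gc.
  - by rewrite Tseq_cswap // ract_dcomp Gd.
Qed.

Fixpoint Pout_map (n : nat) {A B : Ob X} (h : Hom A B) : Hom (Pout n A) (Pout n B) :=
  match n with 0 => h | S m => prodmap (Pout_map m h) (Pout_map m h) end.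
Fixpoint Tout (n : nat) {A B : Ob X} (F : dseq A B) : dseq (Pout n A) (Pout n B) :=
  match n with 0 => F | S m => Tseq (Tout m F) end.
Fixpoint iout (n : nat) (A : Ob X) : Hom (Pout n A) A :=
  match n with 0 => idm A | S m => comp (p1 (Pout m A) (Pout m A)) (iout m A) end.

Lemma additive_Pout_map n : forall {A B : Ob X} (h : Hom A B),
  additive h -> additive (Pout_map n h).
Proof. by elim: n => [|n IHn] A B h Hh //=; apply: additive_prodmap; apply: IHn. Qed.
Lemma additive_iout n (A : Ob X) : additive (iout n A).
Proof. elim: n => [|n IHn] /=; [exact: additive_id | exact: additive_comp additive_p1 IHn]. Qed.

Lemma Dout_sadd n : forall {A B : Ob X} (F G : dseq A B),
  Dout n (sadd F G) = sadd (Dout n F) (Dout n G).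
Proof. by elim: n => [|n IHn] A B F G //=; rewrite IHn. Qed.
Lemma Dout_szero n : forall (A B : Ob X), Dout n (szero A B) = szero (Pout n A) B.
Proof. by elim: n => [|n IHn] A B //=; rewrite IHn. Qed.
Lemma Dout_spair n : forall {A B D : Ob X} (F : dseq A B) (G : dseq A D),
  Dout n (spair F G) = spair (Dout n F) (Dout n G).
Proof. by elim: n => [|n IHn] A B D F G //=; rewrite IHn. Qed.
Lemma Dout_lact n : forall {A A' B : Ob X} (h : Hom A' A) (F : dseq A B),
  Dout n (lact h F) = lact (Pout_map n h) (Dout n F).
Proof. by elim: n => [|n IHn] A A' B h F //=; rewrite IHn. Qed.
Lemma Dout_ract n : forall {A B B' : Ob X} (F : dseq A B) (k : Hom B B'),
  Dout n (ract F k) = ract (Dout n F) k.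
Proof. by elim: n => [|n IHn] A B B' F k //=; rewrite IHn. Qed.
Lemma Dout_dcomp n : forall {A B D : Ob X} (F : dseq A B) (G : dseq B D),
  Dout n (dcomp F G) = dcomp (Tout n F) (Dout n G).
Proof. by elim: n => [|n IHn] A B D F G //=; rewrite IHn. Qed.
Lemma Dout_iden n : forall (A : Ob X), Dout n (iden A) = lin (iout n A).
Proof. by elim: n => [|n IHn] A /=; rewrite ?lin_id // IHn Dseq_lin. Qed.

(* The two ways of iterating D land in the differently bracketed objects
   Pout n (P A) and P (Pout n A), so they are compared as dependent pairs. *)
Lemma Dout_Dseq n {A B : Ob X} (F : dseq A B) :
  existT (fun Y => dseq Y B) _ (Dout n (Dseq F))
  = existT (fun Y => dseq Y B) _ (Dseq (Dout n F)).
Proof.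
  elim: n => [|n IHn] //=.
  exact (f_equal (fun s : {Y : Ob X & dseq Y B} =>
                    existT (fun Y => dseq Y B) (P (projT1 s)) (Dseq (projT2 s))) IHn).
Qed.

Lemma isDseq_Dcond {A B : Ob X} (F : dseq A B) : isDseq F <-> forall n, Dcond (Dout n F).
Proof.
  split=> HF n.
  - by case: (HF n) => Ha [Hb [Hc Hd]]; split.
  - by case: (HF n) => Ha Hb Hc Hd.
Qed.

Lemma isDseq_Dseq {A B : Ob X} (F : dseq A B) : isDseq F -> isDseq (Dseq F).
Proof.
  move=> /isDseq_Dcond HF; apply/isDseq_Dcond => n.
  pose Dcond' (s : {Y : Ob X & dseq Y B}) := Dcond (projT2 s).
  change (Dcond' (existT (fun Y => dseq Y B) _ (Dout n (Dseq F)))).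
  rewrite Dout_Dseq; exact: HF (S n).
Qed.

Lemma isDseq_lact {A A' B : Ob X} (h : Hom A' A) (F : dseq A B) :
  additive h -> isDseq F -> isDseq (lact h F).
Proof.
  move=> Hh /isDseq_Dcond HF; apply/isDseq_Dcond => n.
  rewrite Dout_lact; exact: Dcond_lact (additive_Pout_map n h Hh) (HF n).
Qed.
Lemma isDseq_ract {A B B' : Ob X} (F : dseq A B) (k : Hom B B') :
  additive k -> isDseq F -> isDseq (ract F k).
Proof.
  move=> Hk /isDseq_Dcond HF; apply/isDseq_Dcond => n.
  rewrite Dout_ract; exact: Dcond_ract k Hk (HF n).
Qed.
Lemma isDseq_sadd {A B : Ob X} (F G : dseq A B) : isDseq F -> isDseq G -> isDseq (sadd F G).
Proof.
  move=> /isDseq_Dcond HF /isDseq_Dcond HG; apply/isDseq_Dcond => n.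
  rewrite Dout_sadd; exact: Dcond_sadd _ _ (HF n) (HG n).
Qed.
Lemma isDseq_szero (A B : Ob X) : isDseq (szero A B).
Proof. by apply/isDseq_Dcond => n; rewrite Dout_szero; apply: Dcond_szero. Qed.
Lemma isDseq_spair {A B D : Ob X} (F : dseq A B) (G : dseq A D) :
  isDseq F -> isDseq G -> isDseq (spair F G).
Proof.
  move=> /isDseq_Dcond HF /isDseq_Dcond HG; apply/isDseq_Dcond => n.
  rewrite Dout_spair; exact: Dcond_spair _ _ (HF n) (HG n).
Qed.
Lemma isDseq_iden (A : Ob X) : isDseq (iden A).
Proof.
  apply/isDseq_Dcond => n; rewrite Dout_iden /lin.
  exact: Dcond_ract _ (additive_iout n A) (Dcond_iden _).
Qed.
Lemma isDseq_lin {A B : Ob X} (h : Hom A B) : additive h -> isDseq (lin h).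
Proof. move=> Hh; exact: isDseq_ract _ Hh (isDseq_iden A). Qed.
Lemma isDseq_term {A : Ob X} (F : dseq A term) : isDseq F.
Proof. apply/isDseq_Dcond => n; exact: Dcond_term. Qed.
Lemma isDseq_Tseq {A B : Ob X} (F : dseq A B) : isDseq F -> isDseq (Tseq F).
Proof.
  move=> HF; rewrite Tseq_spair.
  exact: isDseq_spair _ _ (isDseq_lact _ _ additive_p0 HF) (isDseq_Dseq _ HF).
Qed.
Lemma isDseq_Tout n {A B : Ob X} (F : dseq A B) : isDseq F -> isDseq (Tout n F).
Proof. by elim: n => [|n IHn] //= HF; apply: isDseq_Tseq; apply: IHn. Qed.
Lemma isDseq_dcomp {A B D : Ob X} (F : dseq A B) (G : dseq B D) :
  isDseq F -> isDseq G -> isDseq (dcomp F G).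
Proof.
  move=> HF /isDseq_Dcond HG; apply/isDseq_Dcond => n.
  rewrite Dout_dcomp; apply: Dcond_dcomp _ _ _ (HG n).
  by move/isDseq_Dcond: (isDseq_Tout n F HF) => /(_ 0).
Qed.

Lemma DX_CLAC : is_CLAC (DX X) (fun A B f => @isDseq X A B f).
Proof.
  split=> /=.
  - exact: isDseq_iden.
  - move=> A B D f g; exact: isDseq_dcomp.
  - move=> A B f g; exact: isDseq_sadd.
  - exact: isDseq_szero.
  - move=> A B; exact: isDseq_lin additive_p0.
  - move=> A B; exact: isDseq_lin additive_p1.
  - move=> A B D f g; exact: isDseq_spair.
  - move=> A; exact: isDseq_term.
  - move=> A B f _; exact: dcomp_idl.
  - move=> A B f _; exact: dcomp_idr.
  - move=> A B D E f g h _ _ _; exact: dcomp_assoc.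
  - by move=> A B f g h _ _ _; apply: dseq_ext => n; rewrite addA.
  - by move=> A B f g _ _; apply: dseq_ext => n; rewrite addC.
  - by move=> A B f _; apply: dseq_ext => n; rewrite addm0.
  - move=> A B D f g h _ _ _; exact: dcomp_sadd.
  - move=> A B D f _; exact: dcomp_szero.
  - by move=> A B D f g _ _; rewrite dcomp_lin spair_p0.
  - by move=> A B D f g _ _; rewrite dcomp_lin spair_p1.
  - move=> A B D h _; apply: dseq_ext => n; rewrite !dcomp_lin.
    exact: pair_eta _ _ ax _ _ _ _ I.
  - by move=> A f _; apply: dseq_ext => n; apply: term_eq.
  - by move=> A B D f g _ _; rewrite !dcomp_lin ract_sadd //; apply: additive_p0.
  - by move=> A B D; rewrite dcomp_lin ract_szero //; apply: additive_p0.
  - by move=> A B D f g _ _; rewrite !dcomp_lin ract_sadd //; apply: additive_p1.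
  - by move=> A B D; rewrite dcomp_lin ract_szero //; apply: additive_p1.
Qed.

Lemma DX_compE {A B D : Ob X} (f : dseq A B) (g : dseq B D) : @comp (DX X) A B D f g = dcomp f g.
Proof. by []. Qed.
Lemma DX_addE {A B : Ob X} (f g : dseq A B) : @add (DX X) A B f g = sadd f g.
Proof. by []. Qed.

Lemma DX_idm (A : Ob X) : @idm (DX X) A = lin (idm A).
Proof. by rewrite lin_id. Qed.
Lemma DX_comp {A B D : Ob X} (a : Hom A B) (b : Hom B D) :
  @comp (DX X) A B D (lin a) (lin b) = lin (comp a b).
Proof. by rewrite /= lin_dcomp lact_lin. Qed.
Lemma DX_add {A B : Ob X} (a b : Hom A B) : @add (DX X) A B (lin a) (lin b) = lin (add a b).
Proof. exact: lin_add. Qed.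
Lemma DX_zero (A B : Ob X) : @zero (DX X) A B = lin (zero A B).
Proof. by rewrite lin_zero. Qed.
Lemma DX_pair {A B D : Ob X} (a : Hom A B) (b : Hom A D) :
  @pair (DX X) A B D (lin a) (lin b) = lin (pair a b).
Proof. exact: lin_pair. Qed.
Lemma DX_prodmap {A A' B B' : Ob X} (a : Hom A B) (b : Hom A' B') :
  @prodmap (DX X) A A' B B' (lin a) (lin b) = lin (prodmap a b).
Proof. by rewrite /prodmap !DX_comp DX_pair. Qed.

Lemma DX_pair10 (A : Ob X) : @pair10 (DX X) A = lin (pair10 A).
Proof. by rewrite /pair10 DX_idm DX_zero DX_pair. Qed.
Lemma DX_one_x_sum (A : Ob X) : @one_x_sum (DX X) A = lin (one_x_sum A).
Proof. by rewrite /one_x_sum DX_idm DX_add DX_prodmap. Qed.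
Lemma DX_one_x_p0 (A : Ob X) : @one_x_p0 (DX X) A = lin (one_x_p0 A).
Proof. by rewrite /one_x_p0 DX_idm DX_prodmap. Qed.
Lemma DX_one_x_p1 (A : Ob X) : @one_x_p1 (DX X) A = lin (one_x_p1 A).
Proof. by rewrite /one_x_p1 DX_idm DX_prodmap. Qed.
Lemma DX_ell (A : Ob X) : @ell (DX X) A = lin (ell A).
Proof. by rewrite /ell DX_idm DX_zero !DX_pair DX_prodmap. Qed.
Lemma DX_cswap (A : Ob X) : @cswap (DX X) A = lin (cswap A).
Proof. by rewrite /cswap !DX_comp !DX_pair. Qed.

Lemma DX_CDC : is_CDC (DX X) (fun A B f => @isDseq X A B f) (fun A B f => @Dseq X A B f).
Proof.
  have Dcond0 A B (f : dseq A B) : isDseq f -> Dcond f by move/isDseq_Dcond/(_ 0).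
  split=> //.
  - exact: DX_CLAC.
  - move=> A B f; exact: isDseq_Dseq.
  - move=> A B f /Dcond0 Hf.
    by rewrite DX_one_x_sum DX_one_x_p0 DX_one_x_p1 !DX_compE DX_addE !lin_dcomp Dcond_sum.
  - move=> A B f /Dcond0 Hf; by rewrite DX_pair10 DX_compE lin_dcomp Dcond_pair10.
  - by move=> A B; rewrite DX_compE Dseq_lin lin_dcomp lact_lin.
  - by move=> A B; rewrite DX_compE Dseq_lin lin_dcomp lact_lin.
  - by move=> A B D f g _ _; rewrite !DX_compE lin_dcomp.
  - move=> A B f /Dcond0 Hf; by rewrite DX_ell DX_compE lin_dcomp Dcond_ell.
  - move=> A B f /Dcond0 Hf; by rewrite DX_cswap DX_compE lin_dcomp Dcond_cswap.
Qed.

Lemma DX_tangent {A B : Ob X} (f : dseq A B) :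
  @tangent_of (DX X) (fun A B f => @Dseq X A B f) A B f = Tseq f.
Proof. by rewrite /tangent_of /= lin_dcomp. Qed.

End DSequences.

Theorem corollary4p22 (X : CLAC) :
  is_CDC (DX X) (fun A B f => @isDseq X A B f) (fun A B f => @Dseq X A B f)
  /\ (forall (A B : Ob X) (f : dseq X A B), isDseq f ->
        delta X f 1 = Dseq f)
  /\ (forall (A B : Ob X) (f : dseq X A B), isDseq f ->
        @tangent_of (DX X) (fun A B f => @Dseq X A B f) A B f = Tseq X f).
Proof.
  split; [exact: DX_CDC | split].
  - by [].
  - move=> A B f _; exact: DX_tangent.
Qed.
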